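(* Let $\mathcal H(t)=\sum_{n\ge1}h_nt^n$, where $h_n$ is the number of bicoloured noncrossing configurations of size $n$. Then $$-t-t^2+(1-4t)\mathcal H(t)-3\mathcal H(t)^2=0.$$
   Context: For $n\ge2$, a bicoloured noncrossing configuration (BNC) of size $n$ is a regular polygon with vertices $1,\dots,n+1$ numbered clockwise, together with two disjoint sets of arcs, blue and red. The arcs are the pairs $(i,j)$, $1\le i<j\le n+1$: the edges are $(i,i+1)$, the base is $(1,n+1)$, and the others are diagonals. Coloured (blue or red) arcs must be pairwise noncrossing, where $(i,j)$ and $(k,l)$ cross iff $i<k<j<l$ or $k<i<l<j$. Every red arc must be a diagonal. Arcs in neither set are uncoloured. By convention there is exactly one BNC of size $1$. *)

From mathcomp Require Import all_boot all_order all_algebra.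
Set Implicit Arguments. Unset Strict Implicit. Unset Printing Implicit Defensive.
Import GRing.Theory Num.Theory.

(* Vertices of the polygon for size n are 1, ..., n+1; we use 'I_(n+2)
   (values 0..n+1) and only use values >= 1. *)
Definition vert (n : nat) := 'I_n.+2.
Definition pair_t (n : nat) := ('I_n.+2 * 'I_n.+2)%type.

Definition is_arc (n : nat) (a : pair_t n) : bool :=
  (1 <= nat_of_ord a.1)%N && (nat_of_ord a.1 < nat_of_ord a.2)%N.
Definition is_edge (n : nat) (a : pair_t n) : bool :=
  nat_of_ord a.2 == (nat_of_ord a.1).+1.
Definition is_base (n : nat) (a : pair_t n) : bool :=
  (nat_of_ord a.1 == 1%N) && (nat_of_ord a.2 == n.+1).
Definition is_diagonal (n : nat) (a : pair_t n) : bool :=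
  [&& is_arc a, ~~ is_edge a & ~~ is_base a].

Definition cross (n : nat) (a b : pair_t n) : bool :=
  let i := nat_of_ord a.1 in let j := nat_of_ord a.2 in
  let k := nat_of_ord b.1 in let l := nat_of_ord b.2 in
  [&& (i < k)%N, (k < j)%N & (j < l)%N] || [&& (k < i)%N, (i < l)%N & (l < j)%N].

Definition is_BNC (n : nat) (B R : {set pair_t n}) : bool :=
  [&& [forall a in B, is_arc a],
      [forall a in R, is_diagonal a],
      [disjoint B & R] &
      [forall a in B :|: R, forall b in B :|: R, ~~ cross a b]].

(* h_n = number of BNCs of size n (h_1 = 1 by convention; h_0 = 0 since the
   series starts at n = 1) *)
Definition h (n : nat) : nat :=
  match n with
  | 0 => 0
  | 1 => 1
  | _ => #|[set BR : {set pair_t n} * {set pair_t n} | is_BNC BR.1 BR.2]|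
  end.

Definition fps := nat -> int.
Definition fps_const (c : int) : fps := fun m => if m == 0%N then c else 0%R.
Definition fps_X : fps := fun m => if m == 1%N then 1%R else 0%R.
Definition fps_add (f g : fps) : fps := fun m => (f m + g m)%R.
Definition fps_opp (f : fps) : fps := fun m => (- f m)%R.
Definition fps_scale (c : int) (f : fps) : fps := fun m => (c * f m)%R.
Definition fps_mul (f g : fps) : fps :=
  fun m => (\sum_(i < m.+1) f i * g (m - i)%N)%R.
Definition fps_zero : fps := fun _ => 0%R.

Definition Hser : fps := fun m => Posz (h m).

From mathcomp Require Import all_boot all_order all_algebra zify.
From Stdlib Require Import FunctionalExtensionality.

Import GRing.Theory.

(* A configuration on the vertex interval [a, c] ([bnc_on a c]) leaves the
   chord (a, c) uncoloured, or colours it blue, or red when it is a diagonal;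
   the last two kinds are in bijection with the first ([bnc_free a c]), so
   |bnc_on a c| = (2 + [diagonal]) |bnc_free a c|.  A configuration in
   [bnc_free a b] splits uniquely at the farthest neighbour j of a
   (or j = a + 1 when there is none beyond it): the arcs ending at most at j
   form a configuration on [a, j] containing (a, j), and the remaining ones a
   configuration on [j, b], because an arc from ]a, j[ to ]j, b] would cross
   (a, j).  This yields a convolution recurrence in the interval length alone,
   by which 2 |bnc_free| = h_L + [L = 1] on intervals of length L and
     h_L = sum_(k=1)^(L-1) (h_k + [k = 1]) (3 h_(L-k) + [L - k = 1])  (L >= 2),
   the coefficientwise form of the quadratic equation. *)

Section IntervalConfigurations.

Variable n : nat.
Local Notation Arc := (pair_t n).
Local Notation Conf := ({set Arc} * {set Arc})%type.

Definition coloured (BR : Conf) : {set Arc} := BR.1 :|: BR.2.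

Definition inside (a c : nat) (C : {set Arc}) : bool :=
  [forall x in C, (a <= x.1) && (x.2 <= c)].

Definition chord (a c : nat) : Arc := (inord a, inord c).

Definition bnc_on a c :=
  [set BR : Conf | is_BNC BR.1 BR.2 && inside a c (coloured BR)].
Definition bnc_free a c := [set BR in bnc_on a c | chord a c \notin coloured BR].
Definition bnc_blue a c := [set BR in bnc_on a c | chord a c \in BR.1].
Definition bnc_red a c := [set BR in bnc_on a c | chord a c \in BR.2].
(* For [j = a + 1] the edge (a, j) counts as present even when uncoloured, so
   that cutting at the farthest neighbour of a is a bijection. *)
Definition bnc_capped a j :=
  [set BR in bnc_on a j | (j == a.+1) || (chord a j \in coloured BR)].

Lemma is_BNCP (B R : {set Arc}) : reflect
  [/\ {in B, forall x, is_arc x}, {in R, forall x, is_diagonal x},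
      {in B, forall x, x \notin R} & {in B :|: R &, forall x y, ~~ cross x y}]
  (is_BNC B R).
Proof.
rewrite /is_BNC disjoint_subset.
apply: (iffP and4P) =>
  [[/forall_inP hB /forall_inP hR /subsetP hBR /forall_inP hX]|].
  by split=> // x y /hX /forall_inP; apply.
case=> hB hR hBR hX; split; try exact/forall_inP.
  by apply/subsetP => x /hBR; rewrite inE.
by apply/forall_inP => x xC; apply/forall_inP => y; apply: hX.
Qed.

Lemma insideP a c (C : {set Arc}) :
  reflect {in C, forall x : Arc, a <= x.1 /\ x.2 <= c} (inside a c C).
Proof.
apply: (iffP forall_inP) => hC x /hC; first by case/andP.
by case=> -> ->.
Qed.

Lemma chord1 {a c} : a <= n.+1 -> (chord a c).1 = a :> nat.
Proof. by move=> ha; rewrite /= inordK. Qed.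

Lemma chord2 {a c} : c <= n.+1 -> (chord a c).2 = c :> nat.
Proof. by move=> hc; rewrite /= inordK. Qed.

Lemma chord_val (x : Arc) : chord x.1 x.2 = x.
Proof. by rewrite /chord !inord_val; case: x. Qed.

Lemma is_BNC_arc {B R : {set Arc}} {x} :
  is_BNC B R -> x \in B :|: R -> 1 <= x.1 < x.2.
Proof.
case/is_BNCP=> hB hR _ _; case/setUP=> [/hB|/hR] //.
by case/and3P.
Qed.

Lemma is_BNC_subset (B R B' R' : {set Arc}) :
  B' \subset B -> R' \subset R -> is_BNC B R -> is_BNC B' R'.
Proof.
move=> /subsetP sB /subsetP sR /is_BNCP[hB hR hBR hX]; apply/is_BNCP; split.
- by move=> x /sB /hB.
- by move=> x /sR /hR.
- by move=> x /sB /hBR; apply: contra => /sR.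
- have sC : B' :|: R' \subset B :|: R by apply: setUSS; apply/subsetP.
  by move=> x y /(subsetP sC) xC /(subsetP sC); apply: hX.
Qed.

Lemma noncross_setU1 e (C : {set Arc}) :
  {in C &, forall x y, ~~ cross x y} ->
  {in C, forall y, ~~ cross e y && ~~ cross y e} ->
  {in e |: C &, forall x y, ~~ cross x y}.
Proof.
move=> hC he x y /setU1P[->|xC] /setU1P[->|yC].
- by rewrite /cross; apply/negP; lia.
- by case/andP: (he y yC).
- by case/andP: (he x xC).
- exact: hC.
Qed.

Lemma is_BNC_addB e (B R : {set Arc}) :
  is_BNC B R -> is_arc e -> e \notin R ->
  {in B :|: R, forall y, ~~ cross e y && ~~ cross y e} -> is_BNC (e |: B) R.
Proof.
case/is_BNCP=> hB hR hBR hX ea eR he; apply/is_BNCP; split=> //.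
- by move=> x /setU1P[->|/hB].
- by move=> x /setU1P[->|/hBR].
- by rewrite -setUA; apply: noncross_setU1.
Qed.

Lemma is_BNC_addR e (B R : {set Arc}) :
  is_BNC B R -> is_diagonal e -> e \notin B ->
  {in B :|: R, forall y, ~~ cross e y && ~~ cross y e} -> is_BNC B (e |: R).
Proof.
case/is_BNCP=> hB hR hBR hX ed eB he; apply/is_BNCP; split=> //.
- by move=> x /setU1P[->|/hR].
- move=> x xB; rewrite in_setU1 negb_or hBR // andbT.
  by apply: contraNneq eB => <-.
- by rewrite setUCA; apply: noncross_setU1.
Qed.

Lemma inside_subset a c (C D : {set Arc}) :
  D \subset C -> inside a c C -> inside a c D.
Proof. by move=> /subsetP sDC /insideP hC; apply/insideP => x /sDC /hC. Qed.

Lemma inside_chord a c (C : {set Arc}) : a <= n.+1 -> c <= n.+1 ->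
  inside a c C -> inside a c (chord a c |: C).
Proof.
move=> ha hc /insideP hC; apply/insideP => x /setU1P[->|/hC //].
by rewrite chord1 // chord2.
Qed.

Lemma inside_noncross_chord {a c} {C : {set Arc}} : a <= n.+1 -> c <= n.+1 ->
  inside a c C ->
  {in C, forall y, ~~ cross (chord a c) y && ~~ cross y (chord a c)}.
Proof.
move=> ha hc /insideP hC y /hC [y1 y2].
by rewrite /cross chord1 // chord2 //; apply/andP; split; apply/negP; lia.
Qed.

Lemma card_bnc_blue a c : 1 <= a < c -> c <= n.+1 ->
  #|bnc_blue a c| = #|bnc_free a c|.
Proof.
move=> /andP[a1 ac] cn; have an : a <= n.+1 by lia.
set e := chord a c.
have -> : bnc_blue a c = [set (e |: BR.1, BR.2) | BR in bnc_free a c].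
  apply/setP => -[B R]; rewrite !inE /coloured /=; apply/idP/imsetP.
  - case/andP=> /andP[hv hw] eB; exists (B :\ e, R); last by rewrite setD1K.
    have eR : e \notin R by case/is_BNCP: hv => _ _ /(_ e eB).
    rewrite !inE /coloured /= eqxx eR andbT; apply/andP; split.
      exact: is_BNC_subset (subsetDl B [set e]) (subxx R) hv.
    by apply: inside_subset hw; rewrite setSU // subsetDl.
  - case=> -[B' R']; rewrite !inE /= negb_or.
    move=> /and3P[/andP[hv hw] eB' eR'] [-> ->].
    rewrite setU11 andbT -setUA inside_chord // andbT.
    apply: is_BNC_addB hv _ eR' (inside_noncross_chord an cn hw).
    by rewrite /is_arc chord1 // chord2 //; lia.
apply: card_in_imset => -[B1 R1] -[B2 R2]; rewrite !inE /coloured /= !negb_or.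
by move=> /and3P[_ e1 _] /and3P[_ e2 _] [eB ->]; rewrite -(setU1K e1) eB setU1K.
Qed.

Lemma card_bnc_red a c : 1 <= a < c -> c <= n.+1 ->
  #|bnc_red a c| = if is_diagonal (chord a c) then #|bnc_free a c| else 0.
Proof.
move=> /andP[a1 ac] cn; have an : a <= n.+1 by lia.
set e := chord a c.
case ed: (is_diagonal e); last first.
  apply/eqP; rewrite cards_eq0; apply/eqP/setP => -[B R]; rewrite !inE /=.
  by apply/negP => /andP[/andP[/is_BNCP[_ hR _ _] _] /hR]; rewrite ed.
have -> : bnc_red a c = [set (BR.1, e |: BR.2) | BR in bnc_free a c].
  apply/setP => -[B R]; rewrite !inE /coloured /=; apply/idP/imsetP.
  - case/andP=> /andP[hv hw] eR; exists (B, R :\ e); last by rewrite setD1K.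
    have eB : e \notin B by apply: contraL eR; case/is_BNCP: hv => _ _ hBR _ /hBR.
    rewrite !inE /coloured /= eqxx (negbTE eB) andbT; apply/andP; split.
      exact: is_BNC_subset (subxx B) (subsetDl R [set e]) hv.
    by apply: inside_subset hw; rewrite setUS // subsetDl.
  - case=> -[B' R']; rewrite !inE /= negb_or.
    move=> /and3P[/andP[hv hw] eB' eR'] [-> ->].
    rewrite setU11 andbT setUCA inside_chord // andbT.
    exact: is_BNC_addR hv ed eB' (inside_noncross_chord an cn hw).
apply: card_in_imset => -[B1 R1] -[B2 R2]; rewrite !inE /coloured /= !negb_or.
by move=> /and3P[_ _ e1] /and3P[_ _ e2] [-> eR]; rewrite -(setU1K e1) eR setU1K.
Qed.

Lemma card_bnc_on_split a c :
  #|bnc_on a c| = #|bnc_free a c| + #|bnc_blue a c| + #|bnc_red a c|.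
Proof.
set e := chord a c.
rewrite -(cardsID [set BR : Conf | e \in coloured BR]) addnC.
have -> : bnc_on a c :\: [set BR | e \in coloured BR] = bnc_free a c.
  by apply/setP => BR; rewrite !inE andbC.
rewrite -addnA; congr (_ + _).
rewrite -(cardsID [set BR : Conf | e \in BR.1]).
congr (_ + _); apply: eq_card => -[B R]; rewrite !inE /coloured /= -/e.
  by case: (e \in B); rewrite ?andbF ?andbT.
case eB: (e \in B); case eR: (e \in R); rewrite ?andbF ?andbT //=.
by case: is_BNCP => // -[_ _ /(_ e eB)]; rewrite eR.
Qed.

Lemma is_diagonal_chord a c : 1 <= a < c -> c <= n.+1 ->
  is_diagonal (chord a c) = (c != a.+1) && ~~ ((a == 1) && (c == n.+1)).
Proof.
move=> ac cn; have an : a <= n.+1 by lia.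
by rewrite /is_diagonal /is_arc /is_edge /is_base chord1 // chord2 // ac.
Qed.

Lemma card_bnc_on a c : 1 <= a < c -> c <= n.+1 ->
  #|bnc_on a c| = (2 + is_diagonal (chord a c)) * #|bnc_free a c|.
Proof.
move=> ac cn; rewrite card_bnc_on_split card_bnc_blue // card_bnc_red //.
by case: (is_diagonal _); lia.
Qed.

Lemma card_bnc_capped a j : 1 <= a < j -> j <= n ->
  #|bnc_capped a j| = 2 * #|bnc_free a j|.
Proof.
move=> aj jn; have jn1 : j <= n.+1 by lia.
have := @card_bnc_on a j aj jn1; rewrite is_diagonal_chord //.
have [->|ja] /= := eqVneq j a.+1.
  by rewrite addn0 => <-; apply: eq_card => BR; rewrite !inE eqxx andbT.
have -> : (a == 1) && (j == n.+1) = false.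
  by apply/negbTE/nandP; right; apply/eqP; lia.
suff -> : #|bnc_on a j| = #|bnc_free a j| + #|bnc_capped a j|.
  by move=> /= ?; lia.
rewrite -(cardsID [set BR : Conf | chord a j \notin coloured BR]).
by congr (_ + _); apply: eq_card => BR; rewrite !inE ?negbK ?(negPf ja) andbC.
Qed.

Lemma card_bnc_free_edge a : 1 <= a -> a <= n -> #|bnc_free a a.+1| = 1.
Proof.
move=> a1 an.
suff -> : bnc_free a a.+1 = [set (set0, set0)] by rewrite cards1.
apply/setP => -[B R]; rewrite !inE /coloured /=; apply/idP/eqP => [|[-> ->]].
  case/andP=> /andP[hv /insideP hw] he.
  suff : B :|: R == set0 by rewrite setU_eq0 => /andP[/eqP-> /eqP->].
  apply/eqP/setP => x; rewrite in_set0; apply/negbTE/negP => xC; apply/negP: he.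
  have [x1 x2] := hw x xC; have x12 := is_BNC_arc hv xC.
  suff -> : chord a a.+1 = x by rewrite negbK -in_setU.
  rewrite -(chord_val x); congr chord;
    by move: x1 x2 x12; case: (x) => [[i ?] [j ?]] /=; lia.
rewrite setU0 inE andbT; apply/andP; split.
  by apply/is_BNCP; split=> x; rewrite !inE.
by apply/insideP => x; rewrite inE.
Qed.

Lemma bnc_onP {a c} {BR : Conf} : BR \in bnc_on a c ->
  {in coloured BR, forall x : Arc, [/\ 1 <= x.1, x.1 < x.2, a <= x.1 & x.2 <= c]}.
Proof.
rewrite inE => /andP[hv /insideP hw] x xC.
by have [? ?] := hw x xC; have /andP[? ?] := is_BNC_arc hv xC.
Qed.

Definition glue (p q : Conf) : Conf := (p.1 :|: q.1, p.2 :|: q.2).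

Definition restrict (P : pred Arc) (BR : Conf) : Conf :=
  ([set x in BR.1 | P x], [set x in BR.2 | P x]).

Lemma coloured_glue (p q : Conf) :
  coloured (glue p q) = coloured p :|: coloured q.
Proof. by rewrite /coloured /= setUACA. Qed.

Lemma coloured_restrict (P : pred Arc) (BR : Conf) :
  coloured (restrict P BR) = [set x in coloured BR | P x].
Proof. by apply/setP => x; rewrite !inE andb_orl. Qed.

Lemma glue_restrict (P : pred Arc) (BR : Conf) :
  glue (restrict P BR) (restrict (predC P) BR) = BR.
Proof.
case: BR => B R; congr pair; apply/setP => x; rewrite !inE;
  by case: (P x); rewrite ?andbT ?andbF ?orbF.
Qed.

Lemma restrict_glue (P : pred Arc) (p q : Conf) :
  {in coloured p, forall x, P x} -> {in coloured q, forall x, ~~ P x} ->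
  restrict P (glue p q) = p /\ restrict (predC P) (glue p q) = q.
Proof.
case: p q => [B1 R1] [B2 R2] hp hq.
split; congr pair; apply/setP => x; move: (hp x) (hq x);
  rewrite /coloured !inE /=;
  by case: (x \in B1); case: (x \in R1); case: (x \in B2); case: (x \in R2);
     case: (P x) => //=; by [move/(_ isT) | move=> _ /(_ isT)].
Qed.

Lemma is_BNC_restrict (P : pred Arc) (BR : Conf) :
  is_BNC BR.1 BR.2 -> is_BNC (restrict P BR).1 (restrict P BR).2.
Proof.
by apply: is_BNC_subset; apply/subsetP => x; rewrite inE => /andP[].
Qed.

Lemma is_BNC_glue (p q : Conf) : is_BNC p.1 p.2 -> is_BNC q.1 q.2 ->
  {in coloured p & coloured q, forall x y : Arc, x.2 <= y.1} ->
  is_BNC (glue p q).1 (glue p q).2.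
Proof.
move=> hp hq sep; have /is_BNCP[hB1 hR1 hBR1 hX1] := hp.
have /is_BNCP[hB2 hR2 hBR2 hX2] := hq.
have arc_p x : x \in coloured p -> x.1 < x.2 by move/(is_BNC_arc hp)/andP=> [].
have arc_q x : x \in coloured q -> x.1 < x.2 by move/(is_BNC_arc hq)/andP=> [].
have disj x : x \in coloured p -> x \notin coloured q.
  move=> xp; apply/negP => xq; have := sep x x xp xq; have := arc_p x xp.
  by case: (x) => i j /=; lia.
have noncross x y : x \in coloured p -> y \in coloured q ->
    ~~ cross x y && ~~ cross y x.
  move=> xp yq; have := sep x y xp yq; have := arc_p x xp; have := arc_q y yq.
  by rewrite /cross => *; apply/andP; split; apply/negP; lia.
apply/is_BNCP; split.
- by move=> x /setUP[/hB1|/hB2].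
- by move=> x /setUP[/hR1|/hR2].
- move=> x; rewrite !inE negb_or => /orP[xB|xB]; apply/andP; split.
  + exact: hBR1.
  + apply/negP => xR; move: (disj x).
    by rewrite /coloured !inE xB xR ?orbT /= => /(_ isT).
  + apply/negP => xR; move: (disj x).
    by rewrite /coloured !inE xB xR ?orbT /= => /(_ isT).
  + exact: hBR2.
- rewrite -/(coloured (glue p q)) coloured_glue.
  move=> x y /setUP[xp|xq] /setUP[yp|yq].
  + exact: hX1.
  + by case/andP: (noncross x y xp yq).
  + by case/andP: (noncross y x yp xq).
  + exact: hX2.
Qed.

Definition reach a (BR : Conf) : nat :=
  maxn a.+1 (\max_(x in coloured BR | nat_of_ord x.1 == a) nat_of_ord x.2).

Lemma reach_gt a BR : a < reach a BR.
Proof. exact: leq_maxl. Qed.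

Lemma reach_ge {a BR} {x : Arc} :
  x \in coloured BR -> x.1 = a :> nat -> x.2 <= reach a BR.
Proof.
move=> xC x1; apply: leq_trans (leq_maxr _ _).
by apply: (leq_bigmax_cond x); rewrite xC x1 eqxx.
Qed.

Lemma reach_capped a BR :
  (reach a BR == a.+1) || (chord a (reach a BR) \in coloured BR).
Proof.
rewrite /reach; set M := \max_(x in _ | _) _.
have [_|ltaM] := leqP M a.+1; first by rewrite eqxx.
apply/orP; right.
have [y /andP[yC /eqP y1] ->] :
    {y | (y \in coloured BR) && (nat_of_ord y.1 == a) & M = nat_of_ord y.2}.
  apply: eq_bigmax_cond.
  case: (pickP [pred x : Arc | (x \in coloured BR) && (nat_of_ord x.1 == a)]).
    by move=> x Px; apply/card_gt0P; exists x.
  by move=> A0; move: ltaM; rewrite /M big_pred0.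
by rewrite -y1 chord_val.
Qed.

Lemma reach_eq a j BR : a < j -> j <= n.+1 ->
  (j == a.+1) || (chord a j \in coloured BR) ->
  {in coloured BR, forall x : Arc, x.1 = a :> nat -> x.2 <= j} -> reach a BR = j.
Proof.
move=> aj jn hj hx; have an : a <= n.+1 by lia.
apply/eqP; rewrite eqn_leq geq_max aj /=; apply/andP; split.
  by apply/bigmax_leqP => x /andP[xC /eqP]; apply: hx.
case/orP: hj => [/eqP->|jC]; first exact: reach_gt.
by have := reach_ge jC (chord1 an); rewrite chord2.
Qed.

Lemma reach_lt {a b BR} : a.+1 < b -> BR \in bnc_free a b -> reach a BR < b.
Proof.
move=> ab; rewrite inE => /andP[hW hb]; rewrite /reach gtn_max ab /=.
apply: (@leq_ltn_trans b.-1); last by lia.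
apply/bigmax_leqP => x /andP[xC /eqP x1].
have [_ _ _ x2] := bnc_onP hW x xC.
have xb : nat_of_ord x.2 != b.
  by apply: contraNneq hb => x2b; rewrite -x1 -x2b chord_val.
by move: x2 xb; case: (x) => i j /=; lia.
Qed.

Lemma reach_nested {a b BR} {x : Arc} :
  BR \in bnc_on a b -> x \in coloured BR -> reach a BR < x.2 -> reach a BR <= x.1.
Proof.
move=> hW xC; set j := reach a BR => jx.
have [_ x12 ax _] := bnc_onP hW x xC.
rewrite leqNgt; apply/negP => xj.
have [x1|xa] := eqVneq (nat_of_ord x.1) a.
  by have := reach_ge xC x1; rewrite -/j; lia.
have an : a <= n.+1 by move: ax; case: (x) => [[i ?] ?] /=; lia.
have jn : j <= n.+1 by move: jx; case: (x) => [i [k ?]] /=; lia.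
have /orP[/eqP ja|jC] := reach_capped a BR.
  by move: ax xa xj; rewrite /j ja; case: (x) => i k /=; lia.
move: hW; rewrite inE => /andP[/is_BNCP[_ _ _ hX] _].
have := hX _ _ jC xC; rewrite /cross chord1 // chord2 //.
by move: ax xa xj jx; case: (x) => i k /= *; apply/negP; lia.
Qed.

Definition below (j : nat) : pred Arc := [pred x : Arc | x.2 <= j].

Lemma bnc_free_cut {a b BR} : a.+1 < b -> b <= n.+1 -> BR \in bnc_free a b ->
  restrict (below (reach a BR)) BR \in bnc_capped a (reach a BR) /\
  restrict (predC (below (reach a BR))) BR \in bnc_on (reach a BR) b.
Proof.
move=> ab bn hF; have jb := reach_lt ab hF.
have hW : BR \in bnc_on a b by move: hF; rewrite inE => /andP[].
have hv : is_BNC BR.1 BR.2 by move: hW; rewrite inE => /andP[].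
set j := reach a BR in jb *.
split; rewrite !inE is_BNC_restrict //= coloured_restrict.
  apply/andP; split.
    apply/insideP => x; rewrite inE => /andP[xC xj].
    by have [_ _ ax _] := bnc_onP hW x xC.
  have := reach_capped a BR; rewrite -/j => /orP[->//|jC].
  have jn : j <= n.+1 by lia.
  move: jC; rewrite /coloured inE /below /= (chord2 (a := a) jn) leqnn !andbT.
  by move=> ->; rewrite orbT.
apply/insideP => x; rewrite inE => /andP[xC jx]; rewrite /= -ltnNge in jx.
have [_ _ _ xb] := bnc_onP hW x xC.
by split=> //; apply: reach_nested hW xC jx.
Qed.

Lemma glue_bnc_free {a j b p q} : a < j < b -> b <= n.+1 ->
  p \in bnc_capped a j -> q \in bnc_on j b ->
  glue p q \in bnc_free a b /\ reach a (glue p q) = j.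
Proof.
move=> /andP[aj jb] bn; rewrite [p \in _]inE => /andP[pW pj] qW.
have an : a <= n.+1 by lia.
have jn : j <= n.+1 by lia.
have Ap := bnc_onP pW; have Aq := bnc_onP qW.
have hv : is_BNC (glue p q).1 (glue p q).2.
  move: pW qW; rewrite !inE => /andP[hp _] /andP[hq _].
  apply: is_BNC_glue hp hq _ => x y xp yq.
  by have [_ _ _ xj] := Ap x xp; have [_ _ jy _] := Aq y yq; lia.
split.
  rewrite inE [_ \in bnc_on _ _]inE hv coloured_glue in_setU negb_or /=.
  apply/and3P; split.
  - apply/insideP => x /setUP[/Ap|/Aq] [_ x12 ? ?]; by split; lia.
  - by apply/negP => /Ap[_ _ _]; rewrite chord2 //; lia.
  - by apply/negP => /Aq[_ _]; rewrite chord1 //; lia.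
apply: reach_eq => //.
  by rewrite coloured_glue in_setU; case/orP: pj => ->; rewrite ?orbT.
move=> x; rewrite coloured_glue => /setUP[/Ap[_ _ _ xj] //|/Aq[_ _ jx _] x1].
by move: jx; rewrite x1; lia.
Qed.

Lemma bnc_glueK {a j b p q} : p \in bnc_on a j -> q \in bnc_on j b ->
  restrict (below j) (glue p q) = p /\ restrict (predC (below j)) (glue p q) = q.
Proof.
move=> /bnc_onP Ap /bnc_onP Aq; apply: restrict_glue => x.
  by case/Ap.
by case/Aq=> _ x12 jx _; rewrite /= -ltnNge; lia.
Qed.

Lemma card_bnc_free_reach a j b : a < j < b -> b <= n.+1 ->
  #|[set BR in bnc_free a b | reach a BR == j]| =
    #|bnc_capped a j| * #|bnc_on j b|.
Proof.
move=> ajb bn; have ab : a.+1 < b by lia.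
rewrite -cardsX.
have -> : [set BR in bnc_free a b | reach a BR == j] =
    [set glue pq.1 pq.2 | pq in setX (bnc_capped a j) (bnc_on j b)].
  apply/setP => BR; rewrite inE; apply/andP/imsetP => [[hF /eqP hj]|].
    have [hp hq] := bnc_free_cut ab bn hF; rewrite hj in hp hq.
    exists (restrict (below j) BR, restrict (predC (below j)) BR).
      by apply/setXP.
    by rewrite glue_restrict.
  case=> -[p q] /setXP[hp hq] ->.
  by have [-> ->] := glue_bnc_free ajb bn hp hq; split.
have capped_on c p : p \in bnc_capped a c -> p \in bnc_on a c.
  by rewrite inE => /andP[].
apply: card_in_imset => -[p q] -[p' q'] /setXP[/capped_on hp hq].
move=> /setXP[/capped_on hp' hq'] /= e.
have [lp rq] := bnc_glueK hp hq; have [lp' rq'] := bnc_glueK hp' hq'.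
by congr pair; [rewrite -lp -lp' e | rewrite -rq -rq' e].
Qed.

Lemma card_bnc_free_rec a b : a.+1 < b -> b <= n.+1 ->
  #|bnc_free a b| = \sum_(a.+1 <= j < b) #|bnc_capped a j| * #|bnc_on j b|.
Proof.
move=> ab bn; rewrite -sum1_card.
transitivity (\sum_(BR in bnc_free a b)
    \sum_(a.+1 <= j < b) (if j == reach a BR then 1 else 0)).
  apply: eq_bigr => BR hF.
  by rewrite -big_mkcond big_nat1_eq reach_gt (reach_lt ab hF).
rewrite exchange_big /=; apply: eq_big_nat => j ajb.
rewrite -card_bnc_free_reach // -sum1_card -big_mkcondr /=.
by apply: eq_bigl => BR; rewrite !inE eq_sym.
Qed.

End IntervalConfigurations.

Lemma double_card_bnc_free_rec L : 1 < L ->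
  (forall k, 0 < k < L -> forall n a, 1 <= a -> a + k <= n.+1 ->
     2 * #|bnc_free n a (a + k)| = h k + (k == 1)) ->
  forall n a, 1 <= a -> a + L <= n.+1 ->
  2 * #|bnc_free n a (a + L)| =
    \sum_(1 <= k < L) (h k + (k == 1)) * (3 * h (L - k) + (L - k == 1)).
Proof.
move=> L1 IH n a a1 aL.
rewrite card_bnc_free_rec ?big_distrr /=; [|lia|lia].
rewrite -{1}(add1n a) big_addn (_ : a + L - a = L); last lia.
apply: eq_big_nat => k /andP[k1 kL].
have capped : #|bnc_capped n a (k + a)| = h k + (k == 1).
  by rewrite card_bnc_capped 1?addnC ?IH //; lia.
have on : 2 * #|bnc_on n (k + a) (a + L)| = 3 * h (L - k) + (L - k == 1).
  have -> : a + L = (k + a) + (L - k) by lia.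
  rewrite card_bnc_on ?is_diagonal_chord; try lia.
  rewrite mulnCA IH; try lia.
  have -> : (k + a == 1) = false by apply/eqP; lia.
  have [e|ne] := eqVneq (L - k) 1; first by rewrite e addn1 eqxx.
  have -> : k + a + (L - k) != (k + a).+1 by apply/eqP; lia.
  by rewrite /= !addn0.
by rewrite mulnCA on capped.
Qed.

Lemma h_bnc_free L : 1 < L -> h L = 2 * #|bnc_free L 1 (1 + L)|.
Proof.
case: L => [|[|L]] // _.
have -> : h L.+2 = #|bnc_on L.+2 1 (1 + L.+2)|.
  apply: eq_card => -[B R]; rewrite !inE /=.
  case hv: (is_BNC B R) => //=; apply/esym/insideP => x xC.
  by have := is_BNC_arc _ hv xC; case: x xC => [[i ?] [j ?]] /= *; lia.
by rewrite card_bnc_on // is_diagonal_chord // add1n !eqxx /=.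
Qed.

Lemma double_card_bnc_free L n a : 0 < L -> 1 <= a -> a + L <= n.+1 ->
  2 * #|bnc_free n a (a + L)| = h L + (L == 1).
Proof.
elim/ltn_ind: L n a => L IH n a L0 a1 aL.
have [->|L1] := eqVneq L 1; first by rewrite addn1 card_bnc_free_edge //; lia.
have IH' k : 0 < k < L -> forall n a, 1 <= a -> a + k <= n.+1 ->
    2 * #|bnc_free n a (a + k)| = h k + (k == 1).
  by case/andP=> k0 kL m b; apply: IH.
have L2 : 1 < L by lia.
rewrite (double_card_bnc_free_rec _ L2 IH') // h_bnc_free //.
by rewrite (double_card_bnc_free_rec _ L2 IH') // addn0.
Qed.

Lemma h_rec L : 1 < L ->
  h L = \sum_(1 <= k < L) (h k + (k == 1)) * (3 * h (L - k) + (L - k == 1)).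
Proof.
move=> L1; rewrite h_bnc_free // double_card_bnc_free_rec // => k /andP[k0 _] m b.
exact: double_card_bnc_free.
Qed.

Lemma sum_nat_indicator (F : nat -> nat) m p i : m <= i < p ->
  \sum_(m <= k < p) (k == i) * F k = F i.
Proof.
move=> hi; rewrite (eq_bigr (fun k => if k == i then F k else 0)).
  by rewrite -big_mkcond big_nat1_eq hi.
by move=> k _; case: eqP; rewrite ?mul1n.
Qed.

Lemma h_quadratic m :
  h m = 3 * (\sum_(i < m.+1) h i * h (m - i)) + 4 * h m.-1 + (m == 1) + (m == 2).
Proof.
have [|m1] := leqP m 1; first by case: m => [|[|]] //; rewrite !big_ord_recl big_ord0.
have -> : \sum_(i < m.+1) h i * h (m - i) = \sum_(1 <= k < m) h k * h (m - k).
  rewrite -(big_mkord xpredT (fun i => h i * h (m - i))) big_ltn // big_nat_recr /=.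
    by rewrite subnn muln0 addn0.
  lia.
rewrite h_rec // (eq_big_nat _ _ (F2 := fun k =>
    3 * (h k * h (m - k)) + (k == m.-1) * h k + (k == 1) * (3 * h m.-1 + (m == 2)))).
  rewrite !big_split big1_eq /= !sum_nat_indicator ?(negbTE (gtn_eqF m1)); lia.
move=> k /andP[k1 km]; have -> : (m - k == 1) = (k == m.-1) by apply/eqP/eqP; lia.
case: eqVneq => [->|_]; last by rewrite /= !addn0; nia.
have -> : (1 == m.-1) = (m == 2) by apply/eqP/eqP; lia.
by rewrite subn1 /=; lia.
Qed.

Local Open Scope ring_scope.

Lemma fps_XE m : fps_X m = (m == 1)%N.
Proof. by rewrite /fps_X; case: (m == 1)%N. Qed.

Lemma fps_mulX (f : fps) m : f 0%N = 0 -> fps_mul fps_X f m = f m.-1.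
Proof.
move=> f0; rewrite /fps_mul; case: m => [|k]; first by rewrite big_ord1 mul0r.
rewrite !big_ord_recl /= /fps_X /= mul0r mul1r add0r subSS subn0 big1 ?addr0 //.
by move=> i _; rewrite mul0r.
Qed.

Lemma fps_mul1 (f : fps) m : fps_mul (fps_const 1) f m = f m.
Proof.
rewrite /fps_mul big_ord_recl /= mul1r subn0 big1 ?addr0 //.
by move=> i _; rewrite mul0r.
Qed.

Lemma fps_mulDl (f g k : fps) m :
  fps_mul (fps_add f g) k m = fps_mul f k m + fps_mul g k m.
Proof. by rewrite -big_split; apply: eq_bigr => i _; rewrite mulrDl. Qed.

Lemma fps_mulNl (f k : fps) m : fps_mul (fps_opp f) k m = - fps_mul f k m.
Proof. by rewrite -sumrN; apply: eq_bigr => i _; rewrite mulNr. Qed.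

Lemma fps_mulZl c (f k : fps) m : fps_mul (fps_scale c f) k m = c * fps_mul f k m.
Proof. by rewrite mulr_sumr; apply: eq_bigr => i _; rewrite mulrA. Qed.

Lemma Hser_sqr m : fps_mul Hser Hser m = (\sum_(i < m.+1) h i * h (m - i))%N.
Proof.
rewrite /fps_mul /Hser; apply/esym.
by elim/big_rec2: _ => // i a b _ <-; rewrite PoszD PoszM.
Qed.

Theorem proposition2p9 :
  fps_add
    (fps_add
       (fps_add (fps_opp fps_X) (fps_opp (fps_mul fps_X fps_X)))
       (fps_mul (fps_add (fps_const 1) (fps_opp (fps_scale 4 fps_X))) Hser))
    (fps_opp (fps_scale 3 (fps_mul Hser Hser)))
  = fps_zero.
Proof.
apply: functional_extensionality => m.
rewrite /fps_add /fps_opp /fps_scale /fps_zero.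
rewrite fps_mulDl fps_mulNl fps_mulZl fps_mul1 !fps_mulX // Hser_sqr /Hser !fps_XE.
have -> : (m.-1 == 1)%N = (m == 2)%N by case: m => [|[|[|]]].
have := h_quadratic m; lia.
Qed.
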